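(* Let $U>0$, $T\ge0$, $\mu\ge0$, and let $(\gamma,\alpha,\rho_0)$ be a minimizer of $\mathcal{F}$ over $\mathcal{D}$. If $\rho_0=0$ then $\|\gamma\|_{L^1}\ge \mu/(2U)$; if $\rho_0>0$ then $\|\gamma\|_{L^1}\le\mu/(2U)$. Furthermore, if $\mu\le0$, no minimizer has $\rho_0>0$.
   Context: Let $\mathbb{T}^3=[-\pi,\pi]^3$ with periodic identification and normalized Haar measure $dp$. Let $\varepsilon(p)=4\sum_{k=1}^3\sin^2(p_k/2)$. $\mathcal{D}=\{(\gamma,\alpha,\rho_0): \gamma\in L^1(\mathbb{T}^3),\ \gamma\ge0,\ \alpha^2\le\gamma(1+\gamma)\text{ a.e.},\ \rho_0\ge0\}$. With $\beta=\sqrt{(\tfrac12+\gamma)^2-\alpha^2}$, $S(\gamma,\alpha)=\int\big[(\beta+\tfrac12)\ln(\beta+\tfrac12)-(\beta-\tfrac12)\ln(\beta-\tfrac12)\big]dp$, and $\mathcal{F}(\gamma,\alpha,\rho_0)=\int(\varepsilon-\mu)\gamma\,dp-\mu\rho_0-TS(\gamma,\alpha)+\frac U2(\int\alpha)^2+U(\int\gamma)^2+U\rho_0\int\alpha+2U\rho_0\int\gamma+\frac U2\rho_0^2$ (integrals over $\mathbb{T}^3$; entropy term absent at $T=0$). A minimizer is a point of $\mathcal{D}$ attaining $\inf_{\mathcal{D}}\mathcal{F}$. *)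

From mathcomp Require Import all_boot all_order all_algebra.
From mathcomp Require Import all_classical all_reals all_analysis.
Set Implicit Arguments. Unset Strict Implicit. Unset Printing Implicit Defensive.
Import Order.TTheory GRing.Theory Num.Theory.
Import numFieldNormedType.Exports.
Local Open Scope classical_set_scope.
Local Open Scope ring_scope.

Section BogoliubovDefs.
Context {R : realType}.

Definition pt := ((R * R) * R)%type.

Definition leb3 := ((@lebesgue_measure R \x @lebesgue_measure R) \x @lebesgue_measure R)%E.

(* the torus T^3 = [-pi,pi]^3 (the periodic identification is irrelevant for integrals) *)
Definition torus : set pt :=
  [set p | p.1.1 \in `[- pi, pi] /\ p.1.2 \in `[- pi, pi] /\ p.2 \in `[- pi, pi]].

(* integral w.r.t. the normalized Haar measure dp = dp / (2 pi)^3 *)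
Definition tint (f : pt -> R) : R := ((2 * pi) ^+ 3)^-1 * Rintegral leb3 torus f.

Definition L1norm (f : pt -> R) : R := tint (fun p => `|f p|).

Definition disp (p : pt) : R :=
  4 * (sin (p.1.1 / 2) ^+ 2 + sin (p.1.2 / 2) ^+ 2 + sin (p.2 / 2) ^+ 2).

Definition ae_torus (P : pt -> Prop) : Prop :=
  leb3.-negligible [set p | torus p /\ ~ P p].

Definition domD (g a : pt -> R) (rho : R) : Prop :=
  [/\ measurable_fun torus g /\ leb3.-integrable torus (EFin \o g),
      measurable_fun torus a,
      ae_torus (fun p => 0 <= g p),
      ae_torus (fun p => a p ^+ 2 <= g p * (1 + g p)) & 0 <= rho].

Definition betaf (g a : pt -> R) (p : pt) : R :=
  Num.sqrt ((2^-1 + g p) ^+ 2 - a p ^+ 2).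

(* entropy S(gamma, alpha); note ln 0 = 0 in mathcomp, so 0 * ln 0 = 0 *)
Definition entropy (g a : pt -> R) : R :=
  tint (fun p => let b := betaf g a p in
         (b + 2^-1) * ln (b + 2^-1) - (b - 2^-1) * ln (b - 2^-1)).

Definition freeF (U T mu : R) (g a : pt -> R) (rho : R) : R :=
  tint (fun p => (disp p - mu) * g p) - mu * rho - T * entropy g a
  + U / 2 * (tint a) ^+ 2 + U * (tint g) ^+ 2 + U * rho * tint a
  + 2 * U * rho * tint g + U / 2 * rho ^+ 2.

Definition minimizer (U T mu : R) (g a : pt -> R) (rho : R) : Prop :=
  domD g a rho /\
  forall g' a' rho', domD g' a' rho' -> freeF U T mu g a rho <= freeF U T mu g' a' rho'.

End BogoliubovDefs.

From Pilot Require Import Defs.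
From mathcomp Require Import all_boot all_order all_algebra.
From mathcomp Require Import all_classical all_reals all_analysis.
From mathcomp Require Import ring lra measurable_realfun.
Import Order.TTheory GRing.Theory Num.Theory.
Local Open Scope classical_set_scope.
Local Open Scope ring_scope.

(* With A = int alpha and G = int gamma, the functional splits as
     F(gamma, alpha, rho) = F0(gamma, alpha) + U/2 (A + rho)^2 + rho (2 U G - mu),
   where F0 is even in alpha and, the entropy density being increasing in beta
   on [1/2, +oo), F0(gamma, 0) <= F0(gamma, alpha).
   At a minimizer with rho = 0, the competitors (gamma, +-alpha, r) make
   r |-> U/2 (r - |A|)^2 + r (2 U G - mu) nonnegative on r >= 0, so 2 U G >= mu.
   At a minimizer with rho > 0, the competitor (gamma, 0, 0) gives
   U/2 (A + rho)^2 + rho (2 U G - mu) <= 0, so 2 U G <= mu.  If moreover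
   mu <= 0, then G = 0, hence alpha = 0 a.e. (as alpha^2 <= gamma (1 + gamma)),
   A = 0, and U/2 rho^2 <= 0 is absurd. *)

Section xlnx.
Context {R : realType}.
Implicit Types x y t u b : R.

Definition xlnx x : R := x * ln x.

Lemma xlnx0 : xlnx 0 = 0.
Proof. by rewrite /xlnx mul0r. Qed.

Lemma xlnx1 : xlnx 1 = 0.
Proof. by rewrite /xlnx ln1 mulr0. Qed.

(* From [ln (t / u) <= t / u - 1]. *)
Lemma xlnx_tangent t u : 0 < t -> 0 <= u -> xlnx t + (ln t + 1) * (u - t) <= xlnx u.
Proof.
move=> t0; rewrite le_eqVlt => /orP[/eqP<-|u0]; first by rewrite /xlnx mul0r; nra.
have := le_ln1Dx (x := t / u - 1) ltac:(have := divr_gt0 t0 u0; lra).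
rewrite addrC subrK ln_div ?posrE // => hln.
have tu : u * (t / u) = t by rewrite mulrCA divff ?mulr1 // gt_eqF.
rewrite /xlnx; nra.
Qed.

Lemma xlnx_ge x : 0 <= x -> x - 1 <= xlnx x.
Proof. by move=> x0; have := xlnx_tangent 1 x ltr01 x0; rewrite xlnx1 ln1; lra. Qed.

Lemma xlnx_increment_le x y : 0 <= x -> x <= y ->
  xlnx (x + 1) - xlnx x <= xlnx (y + 1) - xlnx y.
Proof.
move=> x0; rewrite le_eqVlt => /orP[/eqP<-//|xy].
have [y1|y1] := leP y (x + 1).
- have := xlnx_tangent (x + 1) (y + 1) ltac:(lra) ltac:(lra).
  have := xlnx_tangent y x ltac:(lra) x0.
  have : ln y <= ln (x + 1) by rewrite ler_ln ?posrE; lra.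
  nra.
- have := xlnx_tangent y (y + 1) ltac:(lra) ltac:(lra).
  have := xlnx_tangent (x + 1) x ltac:(lra) x0.
  have : ln (x + 1) <= ln y by rewrite ler_ln ?posrE; lra.
  lra.
Qed.

Definition entropy_density b : R := xlnx (b + 2^-1) - xlnx (b - 2^-1).

Lemma entropy_densityE b : entropy_density b = xlnx (b - 2^-1 + 1) - xlnx (b - 2^-1).
Proof. by rewrite /entropy_density; congr (xlnx _ - _); lra. Qed.

Lemma entropy_density_half : entropy_density 2^-1 = 0.
Proof. by rewrite entropy_densityE subrr add0r xlnx0 xlnx1 subr0. Qed.

Lemma entropy_density_le b b' : 2^-1 <= b -> b <= b' ->
  entropy_density b <= entropy_density b'.
Proof. by move=> b12 bb'; rewrite !entropy_densityE; apply: xlnx_increment_le; lra. Qed.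

Lemma normr_entropy_density_le b : 0 <= b -> `|entropy_density b| <= b + 1.
Proof.
move=> b0; have [b12|b12] := leP 2^-1 b.
  have := entropy_density_le _ _ (lexx 2^-1) b12; rewrite entropy_density_half => d0.
  rewrite ger0_norm // /entropy_density.
  have := xlnx_tangent (b + 2^-1) (b - 2^-1) ltac:(lra) ltac:(lra).
  have := le_ln1Dx (x := b - 2^-1) ltac:(lra).
  have -> : 1 + (b - 2^-1) = b + 2^-1 by lra.
  lra.
(* For [b < 1/2], [ln (b - 1/2) = 0] by convention. *)
rewrite /entropy_density /xlnx (ln0 (x := b - 2^-1)) ?mulr0 ?subr0; last lra.
have := xlnx_ge (b + 2^-1) ltac:(lra).
have := ln_le0 (x := b + 2^-1) ltac:(lra).
rewrite /xlnx => hln hge; rewrite ler0_norm; nra.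
Qed.

End xlnx.

Section ae_integral.
Context {d} {T : measurableType d} {R : realType}.
Context {mu : {measure set T -> \bar R}} {D : set T}.
Hypothesis mD : measurable D.

Lemma ae_le_integrable {f g : T -> R} : measurable_fun D f ->
  {ae mu, forall x, D x -> `|f x| <= `|g x|} ->
  mu.-integrable D (EFin \o g) -> mu.-integrable D (EFin \o f).
Proof.
move=> mf fg /integrableP[mg goo]; apply/integrableP; split; first exact/measurable_EFinP.
apply: le_lt_trans goo; apply: ae_ge0_le_integral => //.
- by apply: measurableT_comp => //; exact/measurable_EFinP.
- exact: measurableT_comp.
Qed.

Lemma ae_le_Rintegral {f g : T -> R} :
  mu.-integrable D (EFin \o f) -> mu.-integrable D (EFin \o g) ->
  {ae mu, forall x, D x -> f x <= g x} ->
  Rintegral mu D f <= Rintegral mu D g.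
Proof.
move=> If Ig fg.
have mgf : measurable_fun D (g \- f).
  apply: measurable_funB; apply/measurable_EFinP.
  - exact: measurable_int Ig.
  - exact: measurable_int If.
rewrite -subr_ge0 -RintegralB //; apply: fine_ge0.
rewrite (ae_eq_integral (fun x => (Num.max (g x - f x) 0)%:E)) //.
- by apply: integral_ge0 => x _; rewrite lee_fin le_max lexx orbT.
- exact/measurable_EFinP.
- by apply/measurable_EFinP; exact: measurable_maxr.
- by apply: filterS fg => x + Dx => /(_ Dx) fx; rewrite /= max_l // subr_ge0.
Qed.

Lemma ae_eq_Rintegral {f g : T -> R} : measurable_fun D f -> measurable_fun D g ->
  {ae mu, forall x, D x -> f x = g x} -> Rintegral mu D f = Rintegral mu D g.
Proof.
move=> mf mg fg; congr fine; apply: ae_eq_integral => //.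
- exact/measurable_EFinP.
- exact/measurable_EFinP.
- by apply: filterS fg => x + Dx => /(_ Dx) /= ->.
Qed.

Lemma ae_eq0_of_Rintegral_eq0 {f : T -> R} : mu.-integrable D (EFin \o f) ->
  {ae mu, forall x, D x -> 0 <= f x} -> Rintegral mu D f = 0 ->
  {ae mu, forall x, D x -> f x = 0}.
Proof.
move=> If f0 If0.
have mf : measurable_fun D (EFin \o f) by exact: measurable_int If.
have : (\int[mu]_(x in D) `|(f x)%:E| = 0)%E.
  rewrite (ae_eq_integral (EFin \o f)) //; last 2 first.
  - exact: measurableT_comp.
  - by apply: filterS f0 => x + Dx => /(_ Dx) fx; rewrite /= ger0_norm.
  by rewrite -[LHS]fineK ?(integrable_fin_num mD If) //; congr EFin.
move/(ae_eq_integral_abs mu mD mf).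
by apply: filterS => x + Dx => /(_ Dx) [].
Qed.

End ae_integral.

Section torus.
Context {R : realType}.
Local Notation leb3 := (@leb3 R).
Local Notation integrable f := (leb3.-integrable torus (EFin \o f)).
Implicit Types f h : @pt R -> R.

Lemma torusE :
  torus = [set` `[- pi, pi]] `*` [set` `[- pi, pi]] `*` [set` `[- pi, pi]] :> set (@pt R).
Proof. by apply/seteqP; split => [[[? ?] ?] [? []]|[[? ?] ?] [[? ?] ?]]. Qed.

Lemma measurable_torus : measurable (torus : set (@pt R)).
Proof. by rewrite torusE; apply: measurableX => //; exact: measurableX. Qed.

Lemma leb3_torus_lt_oo : (leb3 torus < +oo)%E.
Proof.
have Ifin : @lebesgue_measure R [set` `[- pi, pi]%R] \is a fin_num.
  by rewrite ge0_fin_numE // lebesgue_measure_itv /=; case: ifP => _; rewrite ?ltry.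
rewrite torusE /Defs.leb3 !product_measure1E //; last exact: measurableX.
rewrite [X in (X * _)%E]product_measure1E //.
by rewrite lte_mul_pinfty ?mule_ge0 ?fin_numM // -ge0_fin_numE.
Qed.

Lemma integrable_torus_cst (k : R) : integrable (cst k).
Proof.
apply: measurable_bounded_integrable;
  [exact: measurable_torus | exact: leb3_torus_lt_oo | exact: measurable_cst | exact: bounded_cst].
Qed.

Lemma integrable_torusDr f (k : R) : integrable f -> integrable (fun p => f p + k).
Proof.
(* [mu := leb3] reconciles the measure display of [leb3] with the default
   product display under which [measurable torus] elaborates. *)
move=> If; have := integrableD (mu := leb3) measurable_torus If (integrable_torus_cst k).
by apply: eq_integrable; first exact: measurable_torus.
Qed.

Lemma ae_torusE (P : @pt R -> Prop) : ae_torus P <-> {ae leb3, forall p, torus p -> P p}.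
Proof.
split; apply: negligibleS => p /=; first by move=> /not_implyP.
by move=> [tp nP] /(_ tp).
Qed.

(* Stated on [ae_torus] because instance inference of the a.e. filter of [leb3]
   fails, so [filterS] is unavailable there. *)
Lemma ae_torusS2 {P Q S : @pt R -> Prop} : (forall p, P p -> Q p -> S p) ->
  ae_torus P -> ae_torus Q -> ae_torus S.
Proof.
move=> PQS hP hQ; apply: negligibleS (negligibleU hP hQ) => p /= [tp nS].
by have [Pp|] := pselect (P p); [right; split => // Qp; exact/nS/PQS | left].
Qed.

Lemma ae_torusS {P Q : @pt R -> Prop} : (forall p, P p -> Q p) ->
  ae_torus P -> ae_torus Q.
Proof. by move=> PQ hP; apply: (ae_torusS2 _ hP hP) => p Pp _; exact: PQ. Qed.

Lemma tint_scale_gt0 : 0 < ((2 * pi) ^+ 3)^-1 :> R.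
Proof. by rewrite invr_gt0 exprn_gt0 // mulr_gt0 // pi_gt0. Qed.

Lemma tint0 : tint (fun _ : @pt R => 0) = 0.
Proof. by rewrite /tint Rintegral_cst ?mul0r ?mulr0 //; exact: measurable_torus. Qed.

Lemma ae_le_tint f h : integrable f -> integrable h ->
  ae_torus (fun p => f p <= h p) -> tint f <= tint h.
Proof.
move=> If Ih /ae_torusE fh; rewrite /tint ler_pM2l ?tint_scale_gt0 //.
exact: (ae_le_Rintegral (mu := leb3) measurable_torus If Ih fh).
Qed.

Lemma tintN {f} : integrable f -> tint (fun p => - f p) = - tint f.
Proof.
move=> If; rewrite /tint -mulrN -mulN1r -(RintegralZl (mu := leb3) _ measurable_torus If).
by congr (_ * _); apply: eq_Rintegral => p _; rewrite mulN1r.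
Qed.

Lemma ae_eq_tint f h : measurable_fun torus f -> measurable_fun torus h ->
  ae_torus (fun p => f p = h p) -> tint f = tint h.
Proof.
move=> mf mh /ae_torusE fh.
by rewrite /tint (ae_eq_Rintegral (mu := leb3) measurable_torus mf mh fh).
Qed.

End torus.

Section domain.
Context {R : realType}.
Local Notation leb3 := (@leb3 R).
Local Notation integrable f := (leb3.-integrable torus (EFin \o f)).
Implicit Types (g a : @pt R -> R) (rho : R).

Lemma domD_rho {g a rho rho'} : domD g a rho -> 0 <= rho' -> domD g a rho'.
Proof. by case=> *; split. Qed.

Lemma domD_oppa {g a rho} : domD g a rho -> domD g (fun p => - a p) rho.
Proof.
case=> [mgI ma g0 ga rho0]; split => //; first exact: measurable_funN.
by move: ga; congr ae_torus; apply: boolp.funext => p; rewrite sqrrN.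
Qed.

Lemma domD_alpha0 {g a rho} : domD g a rho -> domD g (fun _ => 0) 0.
Proof.
case=> [mgI ma g0 ga rho0]; split => //; apply: ae_torusS g0 => p gp0.
by rewrite expr0n /= mulr_ge0 // addr_ge0.
Qed.

(* [alpha^2 <= gamma (1 + gamma) <= (gamma + 1/2)^2] *)
Lemma domD_integrable_alpha {g a rho} : domD g a rho -> integrable a.
Proof.
case=> [[mg Ig] ma g0 ga _].
have Ig1 := integrable_torusDr g (2^-1) Ig.
apply: (ae_le_integrable (mu := leb3) measurable_torus ma _ Ig1).
apply/ae_torusE/(ae_torusS2 _ g0 ga) => p gp0 hga.
rewrite (ger0_norm (x := g p + 2^-1)); last lra.
by rewrite -ler_sqr ?nnegrE // ?real_normK ?num_real //; nra.
Qed.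

Lemma domD_tint_ge0 {g a rho} : domD g a rho -> 0 <= tint g.
Proof.
case=> [[mg Ig] _ g0 _ _]; rewrite -tint0.
exact: ae_le_tint (integrable_torus_cst 0) Ig g0.
Qed.

Lemma domD_L1norm {g a rho} : domD g a rho -> L1norm g = tint g.
Proof.
case=> [[mg Ig] _ g0 _ _]; rewrite /L1norm.
apply: ae_eq_tint => //; first exact: measurableT_comp.
by apply: ae_torusS g0 => p /ger0_norm.
Qed.

Lemma domD_tint_alpha_eq0 {g a rho} : domD g a rho -> tint g = 0 -> tint a = 0.
Proof.
case=> [[mg Ig] ma g0 ga _] G0.
have g_eq0 : ae_torus (fun p => g p = 0).
  apply/ae_torusE/(ae_eq0_of_Rintegral_eq0 (mu := leb3) measurable_torus Ig).
    exact/ae_torusE.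
  by move: G0; rewrite /tint => /eqP; rewrite mulf_eq0 gt_eqF ?tint_scale_gt0 // => /eqP.
rewrite -tint0; apply: ae_eq_tint ma (measurable_cst _) _.
apply: ae_torusS2 g_eq0 ga => p -> /[!mul0r] ha; apply/eqP.
by rewrite -sqrf_eq0 eq_le ha sqr_ge0.
Qed.

End domain.

Section entropy.
Context {R : realType}.
Local Notation leb3 := (@leb3 R).
Local Notation integrable f := (leb3.-integrable torus (EFin \o f)).
Implicit Types (g a : @pt R -> R) (rho : R).

Lemma entropyE g a : entropy g a = tint (fun p => entropy_density (betaf g a p)).
Proof. by []. Qed.

Lemma entropy_oppa g a : entropy g (fun p => - a p) = entropy g a.
Proof. by rewrite !entropyE /betaf; under eq_fun do rewrite sqrrN. Qed.

Lemma measurable_entropy_density : measurable_fun setT (@entropy_density R).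
Proof.
rewrite /entropy_density /xlnx.
apply: measurable_funB; apply: measurable_funM.
- by apply: measurable_funD.
- by apply: measurableT_comp; [exact: measurable_ln | apply: measurable_funD].
- by apply: measurable_funB.
- by apply: measurableT_comp; [exact: measurable_ln | apply: measurable_funB].
Qed.

Lemma betaf_ge0_le g a p : 0 <= betaf g a p <= 2^-1 + `|g p|.
Proof.
rewrite /betaf sqrtr_ge0 /=.
have : (2^-1 + g p) ^+ 2 - a p ^+ 2 <= (2^-1 + g p) ^+ 2 by rewrite lerBlDr lerDl sqr_ge0.
move/ler_wsqrtr/le_trans; apply; rewrite sqrtr_sqr.
by apply: le_trans (ler_normD _ _) _; rewrite ger0_norm.
Qed.

Lemma integrable_entropy_density g a : integrable g -> measurable_fun torus a ->
  integrable (fun p => entropy_density (betaf g a p)).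
Proof.
move=> Ig ma.
have mg : measurable_fun torus g by apply/measurable_EFinP; exact: measurable_int Ig.
have Ig1 := integrable_torusDr _ (3 / 2) (integrable_norm Ig).
apply: (ae_le_integrable (mu := leb3) measurable_torus _ _ Ig1).
- apply: measurableT_comp measurable_entropy_density _.
  apply: measurableT_comp (continuous_measurable_fun (@sqrt_continuous R)) _.
  by apply: measurable_funB; apply: measurable_funX => //; exact: measurable_funD.
- apply: aeW => p _; have /andP[b0 b1] := betaf_ge0_le g a p.
  have g0 := normr_ge0 (g p).
  rewrite [X in _ <= X]ger0_norm /=; last lra.
  by have := normr_entropy_density_le _ b0; lra.
Qed.

(* [entropy_density] is monotone only on [[1/2, +oo)], and [beta >= 1/2] a.e.
   exactly because [alpha^2 <= gamma (1 + gamma)]. *)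
Lemma entropy_le_alpha0 {g a rho} : domD g a rho ->
  entropy g a <= entropy g (fun _ => 0).
Proof.
case=> [[mg Ig] ma g0 ga _]; rewrite !entropyE.
apply: ae_le_tint; [exact: integrable_entropy_density | |].
  by apply: integrable_entropy_density => //; exact: measurable_cst.
apply: ae_torusS2 g0 ga => p gp0 hga; apply: entropy_density_le; rewrite /betaf.
  by rewrite -[X in X <= _]ger0_norm // -sqrtr_sqr; apply: ler_wsqrtr; nra.
by apply: ler_wsqrtr; rewrite expr0n /= subr0 lerBlDr lerDl sqr_ge0.
Qed.

End entropy.

Lemma nonneg_quadratic_slope_ge0 {R : realFieldType} {U x c : R} :
  0 < U -> 0 <= x ->
  (forall r, 0 <= r -> 0 <= U / 2 * (r - x) ^+ 2 + r * c) -> 0 <= c.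
Proof.
move=> U0 x0 hq; rewrite leNgt; apply/negP => c0.
have r0 : 0 <= x - c / U by rewrite subr_ge0 (le_trans _ x0) // ler_pdivrMr // mul0r ltW.
have := hq _ r0.
have -> : U / 2 * (x - c / U - x) ^+ 2 + (x - c / U) * c = x * c - c ^+ 2 / (2 * U).
  by field; rewrite gt_eqF.
have : 0 < c ^+ 2 / (2 * U) by apply: divr_gt0; nra.
nra.
Qed.

Section free_energy.
Context {R : realType} (U T mu : R).
Implicit Types (g a : @pt R -> R) (rho : R).

Definition freeF0 g a : R :=
  tint (fun p => (disp p - mu) * g p) - T * entropy g a + U * tint g ^+ 2.

Lemma freeF_decomp g a rho : freeF U T mu g a rho =
  freeF0 g a + U / 2 * (tint a + rho) ^+ 2 + rho * (2 * U * tint g - mu).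
Proof. by rewrite /freeF /freeF0; field. Qed.

Lemma freeF0_oppa g a : freeF0 g (fun p => - a p) = freeF0 g a.
Proof. by rewrite /freeF0 entropy_oppa. Qed.

Lemma freeF0_alpha0_le {g a rho} : 0 <= T -> domD g a rho ->
  freeF0 g (fun _ => 0) <= freeF0 g a.
Proof.
move=> T0 D; rewrite /freeF0 lerD2r lerD2l lerN2.
by apply: ler_wpM2l => //; exact: entropy_le_alpha0 D.
Qed.

End free_energy.

Section minimizer.
Context {R : realType} {U T mu : R}.
Implicit Types (g a : @pt R -> R) (rho : R).

Lemma minimizer_rho0_quadratic_ge0 {g a} : 0 < U -> minimizer U T mu g a 0 ->
  forall r, 0 <= r -> 0 <= U / 2 * (r - `|tint a|) ^+ 2 + r * (2 * U * tint g - mu).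
Proof.
move=> U0 [D Fmin] r r0.
have [b [Db Fb Ab]] : exists b,
    [/\ domD g b r, freeF0 U T mu g b = freeF0 U T mu g a & tint b = - `|tint a|].
  have [A0|A0] := lerP 0 (tint a).
  - exists (fun p => - a p); split; [exact/domD_oppa/(domD_rho D) | exact: freeF0_oppa |].
    by rewrite (tintN (domD_integrable_alpha D)) ger0_norm.
  - by exists a; split; [exact: domD_rho D r0 | | rewrite ltr0_norm ?opprK].
have := Fmin g b r Db; rewrite !freeF_decomp Fb Ab addr0 mul0r addr0.
have : 0 <= U / 2 * tint a ^+ 2 by rewrite mulr_ge0 ?sqr_ge0 // divr_ge0 ?ltW.
have -> : - `|tint a| + r = r - `|tint a| by rewrite addrC.
lra.
Qed.

Lemma minimizer_condensate_le0 {g a rho} : 0 <= T -> minimizer U T mu g a rho ->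
  U / 2 * (tint a + rho) ^+ 2 + rho * (2 * U * tint g - mu) <= 0.
Proof.
move=> T0 [D Fmin]; have := Fmin g (fun _ => 0) 0 (domD_alpha0 D).
rewrite !freeF_decomp tint0 add0r expr0n /= mulr0 mul0r !addr0.
have := freeF0_alpha0_le U T mu T0 D; lra.
Qed.

Lemma minimizer_rho_gt0_le {g a rho} : 0 < U -> 0 <= T ->
  minimizer U T mu g a rho -> 0 < rho -> 2 * U * tint g <= mu.
Proof.
move=> U0 T0 Fmin rho0; have Fc := minimizer_condensate_le0 T0 Fmin.
have Q0 : 0 <= U / 2 * (tint a + rho) ^+ 2 by rewrite mulr_ge0 ?sqr_ge0 // divr_ge0 ?ltW.
have : rho * (2 * U * tint g - mu) <= 0 by lra.
by rewrite pmulr_rle0 // subr_le0.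
Qed.

End minimizer.

Theorem corollary4p2 (R : realType) (U T : R) (hU : 0 < U) (hT : 0 <= T) :
  (forall (mu : R), 0 <= mu ->
     forall (g a : pt -> R) (rho : R), minimizer U T mu g a rho ->
       (rho = 0 -> mu / (2 * U) <= L1norm g) /\
       (0 < rho -> L1norm g <= mu / (2 * U))) /\
  (forall (mu : R), mu <= 0 ->
     forall (g a : pt -> R) (rho : R), minimizer U T mu g a rho -> ~ (0 < rho)).
Proof.
have U2 : 0 < 2 * U by rewrite mulr_gt0.
split=> mu mu0 g a rho Fmin.
- rewrite (domD_L1norm Fmin.1) ler_pdivrMr // ler_pdivlMr //; split=> [rho0|rho_gt0].
    subst rho; have := minimizer_rho0_quadratic_ge0 hU Fmin.
    by move/(nonneg_quadratic_slope_ge0 hU (normr_ge0 _)); lra.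
  by have := minimizer_rho_gt0_le hU hT Fmin rho_gt0; lra.
- move=> rho_gt0.
  have G_eq0 : tint g = 0.
    have := minimizer_rho_gt0_le hU hT Fmin rho_gt0.
    have := domD_tint_ge0 Fmin.1; nra.
  have := minimizer_condensate_le0 hT Fmin.
  rewrite (domD_tint_alpha_eq0 Fmin.1 G_eq0) G_eq0 add0r mulr0 add0r.
  have : 0 < U / 2 * rho ^+ 2 by rewrite mulr_gt0 ?exprn_gt0 // divr_gt0.
  nra.
Qed.
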